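(* Let $q$ be a prime power, let $V$ be a $v$-dimensional vector space over $\mathrm{GF}(q)$, and let $\mathcal{G}$ be a $(g-1)$-spread of $V$, i.e. a set of $g$-dimensional subspaces of $V$ such that every $1$-dimensional subspace of $V$ is contained in exactly one element of $\mathcal{G}$. Let $L$ be a $2$-dimensional subspace of $V$ that is not contained in any element of $\mathcal{G}$. Then the number of $3$-dimensional subspaces of $V$ which contain $L$ and which are scattered with respect to $\mathcal{G}$ equals \[ \lambda_{\max}=\begin{bmatrix} v-2\\ 1\end{bmatrix}_q-\begin{bmatrix} 2\\ 1\end{bmatrix}_q\begin{bmatrix} g-1\\ 1\end{bmatrix}_q . \] In particular, this number does not depend on $L$.
   Context: For integers $0\le m\le n$, the Gaussian coefficient is $\begin{bmatrix} n\\ m\end{bmatrix}_q=\prod_{i=0}^{m-1}\frac{q^{n-i}-1}{q^{m-i}-1}$, the number of $m$-dimensional subspaces of an $n$-dimensional $\mathrm{GF}(q)$-vector space. A subspace $B\le V$ is called scattered with respect to the spread $\mathcal{G}$ if $B$ contains no $2$-dimensional subspace that is contained in some element of $\mathcal{G}$ (equivalently, $\dim(B\cap S)\le 1$ for every $S\in\mathcal{G}$). *)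

From HB Require Import structures.
From mathcomp Require Import all_boot all_algebra all_field.
Set Implicit Arguments. Unset Strict Implicit. Unset Printing Implicit Defensive.
Import GRing.Theory.

(* Subspaces {vspace vT} of a vector space over a finite field form a finite
   type (they are a subtype of a type of matrices over a finite field). *)
Import VectorInternalTheory.
HB.instance Definition _ (F : finFieldType) (vT : vectType F) :=
  [Countable of {vspace vT} by <:].
HB.instance Definition _ (F : finFieldType) (vT : vectType F) :=
  [Finite of {vspace vT} by <:].

Local Open Scope ring_scope.

Definition gauss (q n m : nat) : rat :=
  \prod_(i < m) (((q%:R : rat) ^+ (n - i)%N - 1) / ((q%:R : rat) ^+ (m - i)%N - 1)).

Section Spread.
Variables (F : finFieldType) (vT : vectType F).

Definition is_spread (g : nat) (G : {set {vspace vT}}) : Prop :=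
  (forall S, S \in G -> \dim S = g) /\
  (forall P : {vspace vT}, \dim P = 1%N ->
     #|[set S in G | (P <= S)%VS]| = 1%N).

Definition scattered (G : {set {vspace vT}}) (B : {vspace vT}) : bool :=
  [forall S in G, forall W : {vspace vT},
    ((\dim W == 2%N) && (W <= B)%VS) ==> ~~ (W <= S)%VS].
End Spread.

(* The 3-subspaces through L correspond to the points of V/L, so there are
   [v-2]_q of them.  Such a B fails to be scattered exactly when B <= L + S for
   a spread element S meeting L; then B :&: S is 2-dimensional, and S is unique
   because two 2-subspaces of B always meet.  The spread elements meeting L
   correspond to the [2]_q points of L, and each L + S has dimension g+1, so it
   contains [g-1]_q 3-subspaces through L. *)

From mathcomp Require Import all_boot all_algebra all_field.
From mathcomp Require Import ring zify.
Import GRing.Theory Num.Theory.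
Set Implicit Arguments. Unset Strict Implicit. Unset Printing Implicit Defensive.

Lemma card_fibres (T U : finType) (A : {set T}) (B : {set U}) (R : T -> U -> bool) :
    (forall x, x \in A -> #|[set y in B | R x y]| = 1) ->
  #|A| = \sum_(y in B) #|[set x in A | R x y]|.
Proof.
move=> R1; rewrite -sum1_card (eq_bigr _ (fun x Ax => esym (R1 x Ax))).
under eq_bigr do rewrite -sum1dep_card.
under [RHS]eq_bigr do rewrite -sum1dep_card.
rewrite (exchange_big_dep (mem B)) => [|x y _ /andP[]//].
by apply: eq_bigr => y By; apply: eq_bigl => x; rewrite [y \in B]By.
Qed.

Section Covers.
Variables (F : finFieldType) (vT : vectType F).

Definition covers (A U : {vspace vT}) : {set {vspace vT}} :=
  [set B | [&& \dim B == (\dim A).+1, (A <= B)%VS & (B <= U)%VS]].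

Lemma dim_add_line (A : {vspace vT}) x :
  x \notin A -> \dim (A + <[x]>) = (\dim A).+1.
Proof.
move=> xA; have x0 : x != 0%R by apply: contraNneq xA => ->; rewrite mem0v.
suff /dimv_disjoint_sum-> : (A :&: <[x]> = 0)%VS by rewrite dim_vline x0 addn1.
apply/eqP; rewrite -dimv_eq0 -leqn0 -ltnS.
have := dimv_leqif_sup (capvSr A <[x]>); rewrite dim_vline x0 => /ltn_leqif->.
by rewrite subv_cap subvv andbT.
Qed.

End Covers.

Section CardCovers.
Variables (F : finFieldType) (n : nat).
Local Notation vT := 'rV[F]_n.
Local Notation q := #|F|.

Lemma card_vspaceD (A B : {vspace vT}) :
  (A <= B)%VS -> #|[predD B & A]| = q ^ \dim B - q ^ \dim A.
Proof.
move=> AB; rewrite -!card_vspace -(cardID A B).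
rewrite -[X in _ = _ - X](@eq_card _ [predI B & A]) ?addKn // => x.
by rewrite !inE andb_idl // => /(subvP AB).
Qed.

Lemma card_vspaceD_by_covers (A U : {vspace vT}) : (A <= U)%VS ->
  #|[predD U & A]| = #|covers A U| * (q ^ (\dim A).+1 - q ^ \dim A).
Proof.
move=> AU; rewrite -[LHS]sum1_card.
rewrite (partition_big (fun x => A + <[x]>)%VS (fun B => B \in covers A U)) /=.
  rewrite -sum_nat_const; apply: eq_bigr => B; rewrite inE => /and3P[/eqP dB AB BU].
  rewrite -dB -card_vspaceD // sum1dep_card; apply: eq_card => x; rewrite !inE.
  apply/idP/idP => [/andP[/andP[xA xU] /eqP <-]|/andP[xA xB]].
    by rewrite xA memvE addvSr.
  rewrite xA (subvP BU x xB) eqEdim subv_add AB -memvE xB /=.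
  by rewrite dim_add_line // dB.
move=> x /andP[xA xU]; rewrite inE dim_add_line // eqxx addvSl.
by rewrite subv_add AU -memvE.
Qed.

Local Open Scope ring_scope.

Lemma card_covers (A U : {vspace vT}) : (A <= U)%VS ->
  (#|covers A U|%:R : rat) = gauss q (\dim U - \dim A) 1.
Proof.
move=> AU; have := card_vspaceD_by_covers AU; rewrite card_vspaceD //.
rewrite /gauss big_ord1 !subn0 expr1 -(subnKC (dimvS AU)) addKn.
set k := \dim A; set d := (\dim U - k)%N; set c := #|covers A U|.
have q_gt1 : (1 < q)%N := finNzRing_gt1 F.
have qX_mono i j : (i <= j)%N -> (q ^ i <= q ^ j)%N by apply: leq_pexp2l; lia.
move=> /(congr1 (fun m => m%:R : rat)).
rewrite natrM !natrB ?qX_mono ?leq_addr // !natrX; set Q := q%:R.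
rewrite exprD exprS => h.
have Q1 : Q - 1 != 0 by rewrite subr_eq0 pnatr_eq1; lia.
have Qk : Q ^+ k != 0 by rewrite expf_neq0 // pnatr_eq0; lia.
apply: (mulIf Q1); rewrite divfK //; apply: (mulfI Qk).
by rewrite [RHS]mulrBr mulr1 h; ring.
Qed.

End CardCovers.

Section Spread.
Variables (F : finFieldType) (vT : vectType F) (g : nat) (G : {set {vspace vT}}).
Hypothesis spreadG : is_spread g G.

Lemma spread_eq S1 S2 :
  S1 \in G -> S2 \in G -> (S1 :&: S2 != 0)%VS -> S1 = S2.
Proof.
move=> S1G S2G nz12; pose P := <[vpick (S1 :&: S2)%VS]>%VS.
have dimP : \dim P = 1 by rewrite dim_vline vpick0 nz12.
have /cards1P[S defS] : #|[set S in G | (P <= S)%VS]| == 1 by rewrite spreadG.2.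
have PS12 : (P <= S1 :&: S2)%VS by rewrite -memvE memv_pick.
have eqS S' : S' \in G -> (P <= S')%VS -> S' = S.
  by move=> S'G PS'; apply/set1P; rewrite -defS inE S'G.
by move: PS12; rewrite subv_cap => /andP[/(eqS _ S1G)-> /(eqS _ S2G)->].
Qed.

Variable L : {vspace vT}.
Hypotheses (dimL : \dim L = 2) (L_notin_G : forall S, S \in G -> ~ (L <= S)%VS).

Definition meeting := [set S in G | (L :&: S != 0)%VS].

Lemma ltn_dim_capL S : S \in G -> \dim (L :&: S) < 2.
Proof.
move=> SG; rewrite -dimL (ltn_leqif (dimv_leqif_sup (capvSl L S))).
by rewrite subv_cap subvv; apply/negP => /L_notin_G; apply.
Qed.

Lemma dim_cap_meeting S : S \in meeting -> \dim (L :&: S) = 1.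
Proof.
rewrite inE -dimv_eq0 => /andP[SG nz]; have := ltn_dim_capL SG; lia.
Qed.

Lemma dim_add_meeting S : S \in meeting -> \dim (L + S) = g.+1.
Proof.
move=> SL; have := dimv_sum_cap L S; rewrite dim_cap_meeting // dimL.
by move: SL; rewrite inE => /andP[/spreadG.1-> _]; lia.
Qed.

Lemma card_meeting : #|covers 0 L| = #|meeting|.
Proof.
rewrite (@card_fibres _ _ _ meeting (fun P S => (P <= S)%VS)) => [|P].
  rewrite -sum1_card; apply: eq_bigr => S SL; apply/eqP/cards1P.
  exists (L :&: S)%VS; apply/setP => P; rewrite !inE dimv0.
  apply/idP/eqP => [/andP[/and3P[dimP _ PL] PS]|->]; last first.
    by rewrite dim_cap_meeting // sub0v capvSl capvSr.
  by apply/eqP; rewrite eqEdim subv_cap PL PS dim_cap_meeting // (eqP dimP).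
rewrite inE dimv0 => /and3P[/eqP dimP _ PL]; rewrite -(spreadG.2 P dimP).
apply: eq_card => S; rewrite !inE -andbA; apply: andb_id2l => _.
apply/andP/idP => [[]//|PS]; split=> //.
by rewrite -dimv_eq0 -lt0n -dimP; apply: dimvS; rewrite subv_cap PL PS.
Qed.

Section Plane.
Variable B : {vspace vT}.
Hypotheses (dimB : \dim B = 3) (LB : (L <= B)%VS).

Lemma dim_capB_meeting S :
  S \in meeting -> (B <= L + S)%VS -> \dim (B :&: S) = 2.
Proof.
move=> SL BLS; have SG : S \in G by case/setIdP: SL.
have := dimv_sum_cap B S.
have : \dim (B + S) <= \dim (L + S) by apply: dimvS; rewrite subv_add BLS addvSr.
have : \dim (B :&: S) < \dim B.
  rewrite (ltn_leqif (dimv_leqif_sup (capvSl B S))) subv_cap subvv /=.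
  by apply/negP => BS; apply: (L_notin_G SG); apply: subv_trans LB BS.
by rewrite dim_add_meeting // (spreadG.1 S SG) dimB; lia.
Qed.

Lemma meeting_unique S1 S2 : S1 \in meeting -> S2 \in meeting ->
  (B <= L + S1)%VS -> (B <= L + S2)%VS -> S1 = S2.
Proof.
move=> S1L S2L BLS1 BLS2.
apply: spread_eq; [by case/setIdP: S1L | by case/setIdP: S2L |].
(* Two 2-subspaces of the 3-dimensional B meet nontrivially. *)
have := dimv_sum_cap (B :&: S1) (B :&: S2).
have : \dim ((B :&: S1) + (B :&: S2)) <= \dim B.
  by apply: dimvS; rewrite subv_add !capvSl.
have : \dim ((B :&: S1) :&: (B :&: S2)) <= \dim (S1 :&: S2).
  apply: dimvS; rewrite subv_cap.
  by rewrite (subv_trans (capvSl _ _) (capvSr _ _)) (subv_trans (capvSr _ _) (capvSr _ _)).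
by rewrite !dim_capB_meeting // dimB -dimv_eq0; lia.
Qed.

Lemma not_scattered : ~~ scattered G B = [exists S in meeting, (B <= L + S)%VS].
Proof.
apply/idP/exists_inP => [|[S SL BLS]].
  case/forall_inPn => S SG /forallPn[W].
  rewrite negb_imply negbK => /andP[/andP[/eqP dimW WB] WS].
  have WL_LS : (W :&: L <= L :&: S)%VS.
    by rewrite subv_cap capvSr (subv_trans (capvSl _ _) WS).
  (* W and L are distinct 2-subspaces of B, so they span B and meet in a point. *)
  have := dimvS WL_LS; have := ltn_dim_capL SG; have := dimv_sum_cap W L.
  have : \dim (W + L) <= 3 by rewrite -dimB; apply: dimvS; rewrite subv_add WB LB.
  rewrite dimW dimL => le_WL3 dim_WL lt_LS le_WL_LS.
  exists S; first by rewrite inE SG -dimv_eq0 /=; lia.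
  have <- : (W + L)%VS = B by apply/eqP; rewrite eqEdim subv_add WB LB dimB; lia.
  by rewrite subv_add addvSl (subv_trans WS (addvSr L S)).
apply/forall_inPn; exists S; first by case/setIdP: SL.
apply/forallPn; exists (B :&: S)%VS.
by rewrite negb_imply negbK dim_capB_meeting // eqxx capvSl capvSr.
Qed.

End Plane.

Lemma card_not_scattered :
  #|[set B in covers L fullv | ~~ scattered G B]| =
    \sum_(S in meeting) #|covers L (L + S)|.
Proof.
rewrite (@card_fibres _ _ _ meeting (fun B S => (B <= L + S)%VS)) => [|B].
  apply: eq_bigr => S SL; apply: eq_card => B; rewrite !inE dimL subvf andbT.
  apply/idP/idP => [/andP[/andP[/andP[-> ->] _] ->]//|/and3P[/eqP dimB LB BLS]].
  rewrite dimB eqxx LB BLS /= andbT not_scattered //.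
  by apply/exists_inP; exists S.
rewrite !inE dimL subvf andbT => /andP[/andP[/eqP dimB LB]].
rewrite not_scattered // => /exists_inP[S SL BLS]; apply/eqP/cards1P; exists S.
apply/setP => S'; apply/setIdP/set1P => [[S'L BLS']|->//].
exact: meeting_unique BLS' BLS.
Qed.

End Spread.

Theorem lemma3 (F : finFieldType) (v g : nat)
    (G : {set {vspace 'rV[F]_v}}) (L : {vspace 'rV[F]_v}) :
  is_spread g G ->
  \dim L = 2 ->
  (forall S, S \in G -> ~ (L <= S)%VS) ->
  ((#|[set B : {vspace 'rV[F]_v} | [&& \dim B == 3, (L <= B)%VS &
        scattered G B]]|%:R : rat)
   = gauss #|F| (v - 2) 1 - gauss #|F| 2 1 * gauss #|F| (g - 1) 1)%R.
Proof.
move=> spreadG dimL L_notin_G; set cov := covers L fullv.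
have -> : [set B | [&& \dim B == 3, (L <= B)%VS & scattered G B]] =
          [set B in cov | scattered G B].
  by apply/setP => B; rewrite !inE dimL subvf andbT andbA.
have split_cov : #|[set B in cov | scattered G B]| +
                 #|[set B in cov | ~~ scattered G B]| = #|cov|.
  rewrite -(cardsID [set B | scattered G B] cov).
  by congr addn; apply: eq_card => B; rewrite !inE // andbC.
rewrite -(addrK (#|[set B in cov | ~~ scattered G B]|%:R)%R (_%:R)%R).
rewrite -natrD split_cov.
rewrite card_covers ?subvf // dimvf dim_matrix /= mul1r dimL.
rewrite (card_not_scattered spreadG dimL L_notin_G) natr_sum.
rewrite (eq_bigr (fun=> gauss #|F| (g - 1) 1)) => [|S SL]; last first.
  by rewrite card_covers ?addvSl // (dim_add_meeting spreadG dimL L_notin_G SL) dimL.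
rewrite sumr_const -(card_meeting spreadG dimL L_notin_G) -mulr_natl.
by rewrite card_covers ?sub0v // dimv0 dimL.
Qed.
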